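(* Assume $\operatorname{add}(\mathcal N)=\operatorname{cov}(\mathcal N)$. Then $\mathcal{ANM}_{\operatorname{add}(\mathcal N)}\setminus\mathcal{ND}_{\operatorname{add}(\mathcal N)}$ is strongly $\mathfrak c$-algebrable in $\left(\mathbb R^{[0,1]}\right)^{\operatorname{add}(\mathcal N)}$.
   Context: For a regular infinite cardinal $\kappa$, a $\kappa$-sequence $(x_\alpha)_{\alpha<\kappa}$ converges to $x$ if for every neighbourhood $U$ of $x$ there is $\alpha_0<\kappa$ with $x_\alpha\in U$ for all $\alpha_0<\alpha<\kappa$; $\left(\mathbb R^{[0,1]}\right)^{\kappa}$ is the commutative real algebra of $\kappa$-sequences of functions $[0,1]\to\mathbb R$ with indexwise operations. $\lambda$ is Lebesgue measure, $\mathcal N$ the null subsets of $[0,1]$; $\operatorname{add}(\mathcal N)$ the least cardinality of a family of null sets with non-null union, $\operatorname{cov}(\mathcal N)$ the least cardinality of a family of null sets covering $[0,1]$. $\mathcal{ANM}_{\kappa}$: $\kappa$-sequences of Lebesgue measurable $f_\alpha:[0,1]\to\mathbb R$ converging a.e. to a measurable $f$ but not converging in measure to $f$. $\mathcal{ND}_{\kappa}$: $\kappa$-sequences of Lebesgue measurable $f_\alpha:[0,1]\to\mathbb R$ dominated a.e. by a common integrable $g$, converging a.e. to an integrable $f$, with $\int|f_\alpha-f|\,d\lambda\not\to0$. $S$ is strongly $\mu$-algebrable if there is a set $X$ of $\mu$ algebraically independent elements such that every nonzero element of the (non-unital) algebra generated by $X$ belongs to $S$. *)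

From HB Require Import structures.
From mathcomp Require Import all_boot all_order all_algebra.
From mathcomp Require Import all_classical all_reals all_analysis.
From mathcomp Require mpoly.
(* activate the canonical instances of mpoly without importing its notations *)
Canonical mpoly.mpoly_mcoeff__canonical__Algebra_Additive.
Canonical mpoly.mpoly_mcoeff__canonical__GRing_LRMorphism.
Canonical mpoly.mpoly_mcoeff__canonical__GRing_Linear.
Canonical mpoly.mpoly_mcoeff__canonical__GRing_RMorphism.
Canonical mpoly.mpoly_meval__canonical__Algebra_Additive.
Canonical mpoly.mpoly_meval__canonical__GRing_LRMorphism.
Canonical mpoly.mpoly_meval__canonical__GRing_Linear.
Canonical mpoly.mpoly_meval__canonical__GRing_RMorphism.
Canonical mpoly.mpoly_mpoly__canonical__Algebra_AddMagma.
Canonical mpoly.mpoly_mpoly__canonical__Algebra_AddSemigroup.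
Canonical mpoly.mpoly_mpoly__canonical__Algebra_AddUMagma.
Canonical mpoly.mpoly_mpoly__canonical__Algebra_BaseAddMagma.
Canonical mpoly.mpoly_mpoly__canonical__Algebra_BaseAddUMagma.
Canonical mpoly.mpoly_mpoly__canonical__Algebra_BaseZmodule.
Canonical mpoly.mpoly_mpoly__canonical__Algebra_ChoiceBaseAddMagma.
Canonical mpoly.mpoly_mpoly__canonical__Algebra_ChoiceBaseAddUMagma.
Canonical mpoly.mpoly_mpoly__canonical__Algebra_Nmodule.
Canonical mpoly.mpoly_mpoly__canonical__Algebra_Zmodule.
Canonical mpoly.mpoly_mpoly__canonical__GRing_Algebra.
Canonical mpoly.mpoly_mpoly__canonical__GRing_ComAlgebra.
Canonical mpoly.mpoly_mpoly__canonical__GRing_ComNzRing.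
Canonical mpoly.mpoly_mpoly__canonical__GRing_ComNzSemiRing.
Canonical mpoly.mpoly_mpoly__canonical__GRing_ComPzRing.
Canonical mpoly.mpoly_mpoly__canonical__GRing_ComPzSemiRing.
Canonical mpoly.mpoly_mpoly__canonical__GRing_ComSemiAlgebra.
Canonical mpoly.mpoly_mpoly__canonical__GRing_ComUnitAlgebra.
Canonical mpoly.mpoly_mpoly__canonical__GRing_ComUnitRing.
Canonical mpoly.mpoly_mpoly__canonical__GRing_IntegralDomain.
Canonical mpoly.mpoly_mpoly__canonical__GRing_LSemiAlgebra.
Canonical mpoly.mpoly_mpoly__canonical__GRing_LSemiModule.
Canonical mpoly.mpoly_mpoly__canonical__GRing_Lalgebra.
Canonical mpoly.mpoly_mpoly__canonical__GRing_Lmodule.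
Canonical mpoly.mpoly_mpoly__canonical__GRing_NzRing.
Canonical mpoly.mpoly_mpoly__canonical__GRing_NzSemiRing.
Canonical mpoly.mpoly_mpoly__canonical__GRing_PzRing.
Canonical mpoly.mpoly_mpoly__canonical__GRing_PzSemiRing.
Canonical mpoly.mpoly_mpoly__canonical__GRing_SemiAlgebra.
Canonical mpoly.mpoly_mpoly__canonical__GRing_UnitAlgebra.
Canonical mpoly.mpoly_mpoly__canonical__GRing_UnitRing.
Canonical mpoly.mpoly_mpoly__canonical__choice_Choice.
Canonical mpoly.mpoly_mpoly__canonical__choice_SubChoice.
Canonical mpoly.mpoly_mpoly__canonical__eqtype_Equality.
Canonical mpoly.mpoly_mpoly__canonical__eqtype_SubEquality.
Canonical mpoly.mpoly_mpoly__canonical__eqtype_SubType.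
Canonical mpoly.mpoly_multinom__canonical__Order_BDistrLattice.
Canonical mpoly.mpoly_multinom__canonical__Order_BJoinSemilattice.
Canonical mpoly.mpoly_multinom__canonical__Order_BLattice.
Canonical mpoly.mpoly_multinom__canonical__Order_BMeetSemilattice.
Canonical mpoly.mpoly_multinom__canonical__Order_BPOrder.
Canonical mpoly.mpoly_multinom__canonical__Order_BPreorder.
Canonical mpoly.mpoly_multinom__canonical__Order_BTotal.
Canonical mpoly.mpoly_multinom__canonical__Order_DistrLattice.
Canonical mpoly.mpoly_multinom__canonical__Order_JoinSemilattice.
Canonical mpoly.mpoly_multinom__canonical__Order_Lattice.
Canonical mpoly.mpoly_multinom__canonical__Order_MeetSemilattice.
Canonical mpoly.mpoly_multinom__canonical__Order_POrder.
Canonical mpoly.mpoly_multinom__canonical__Order_Preorder.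
Canonical mpoly.mpoly_multinom__canonical__Order_Total.
Canonical mpoly.mpoly_multinom__canonical__choice_Choice.
Canonical mpoly.mpoly_multinom__canonical__choice_Countable.
Canonical mpoly.mpoly_multinom__canonical__choice_SubChoice.
Canonical mpoly.mpoly_multinom__canonical__choice_SubCountable.
Canonical mpoly.mpoly_multinom__canonical__eqtype_Equality.
Canonical mpoly.mpoly_multinom__canonical__eqtype_SubEquality.
Canonical mpoly.mpoly_multinom__canonical__eqtype_SubType.
Set Implicit Arguments. Unset Strict Implicit. Unset Printing Implicit Defensive.
Import Order.TTheory GRing.Theory Num.Theory.
Import numFieldNormedType.Exports.
Local Open Scope classical_set_scope.
Local Open Scope ring_scope.

Section Defs.
Variable R : realType.
Local Notation mu := (@lebesgue_measure R).
Local Notation I01 := (`[(0:R), 1]%classic : set R).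

Definition null01 (A : set R) : Prop := A `<=` I01 /\ mu.-negligible A.

Definition initial_ordinal (d : Order.disp_t) (K : orderType d) : Prop :=
  well_founded (fun a b : K => (a < b)%O) /\
  forall a : K, card_le [set b : K | (b < a)%O] [set: K] /\
                ~ card_le [set: K] [set b : K | (b < a)%O].

Definition card_lt (I K : Type) : Prop :=
  card_le [set: I] [set: K] /\ ~ card_le [set: K] [set: I].

Definition card_is_addN (K : Type) : Prop :=
  (exists N : K -> set R, (forall k, null01 (N k)) /\
      ~ null01 (\bigcup_(k in [set: K]) N k)) /\
  (forall (I : Type) (N : I -> set R), card_lt I K ->
      (forall i, null01 (N i)) -> null01 (\bigcup_(i in [set: I]) N i)).

Definition card_is_covN (K : Type) : Prop :=
  (exists N : K -> set R, (forall k, null01 (N k)) /\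
      I01 `<=` \bigcup_(k in [set: K]) N k) /\
  (forall (I : Type) (N : I -> set R), card_lt I K ->
      (forall i, null01 (N i)) -> ~ (I01 `<=` \bigcup_(i in [set: I]) N i)).

Definition kconv (d : Order.disp_t) (K : orderType d) (T : topologicalType)
  (x : K -> T) (l : T) : Prop :=
  forall U, nbhs l U -> exists a0 : K, forall a : K, (a0 < a)%O -> U (x a).

Definition meas01 (f : R -> R) : Prop := measurable_fun I01 f.

Definition integrable01 (f : R -> R) : Prop := mu.-integrable I01 (EFin \o f).

Definition kconv_ae (d : Order.disp_t) (K : orderType d)
  (fs : K -> R -> R) (f : R -> R) : Prop :=
  {ae mu, forall t, I01 t -> kconv (fun a => fs a t) (f t)}.

Definition kconv_measure (d : Order.disp_t) (K : orderType d)
  (fs : K -> R -> R) (f : R -> R) : Prop :=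
  forall eps : R, 0 < eps ->
    kconv (fun a => mu [set t | I01 t /\ eps <= `|fs a t - f t|]) (0%E : \bar R).

Definition ANM (d : Order.disp_t) (K : orderType d) (fs : K -> R -> R) : Prop :=
  (forall a, meas01 (fs a)) /\
  exists f : R -> R, meas01 f /\ kconv_ae fs f /\ ~ kconv_measure fs f.

Definition ND (d : Order.disp_t) (K : orderType d) (fs : K -> R -> R) : Prop :=
  (forall a, meas01 (fs a)) /\
  (exists g : R -> R, integrable01 g /\
     forall a, {ae mu, forall t, I01 t -> `|fs a t| <= g t}) /\
  exists f : R -> R, integrable01 f /\ kconv_ae fs f /\
     ~ kconv (fun a => (\int[mu]_(t in I01) (`|fs a t - f t|)%:E)%E) (0%E : \bar R).

(** element of the algebra (R^[0,1])^K obtained by evaluating a polynomial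
    (indexwise and pointwise) at the n elements xs of the algebra *)
Definition peval (T : Type) (n : nat) (P : mpoly.mpoly n R)
  (xs : 'I_n -> T -> R -> R) : T -> R -> R :=
  fun a t => mpoly.meval (fun i => xs i a t) P.

(** strong algebrability of S in (R^[0,1])^K, with generators indexed by a
    type G (the cardinality of the generating set is |G|): an injective family
    of generators, algebraically independent, every nonzero element of the
    (non-unital) generated algebra lying in S. *)
Definition strongly_algebrable (T G : Type) (S : (T -> R -> R) -> Prop) : Prop :=
  exists gen : G -> (T -> R -> R),
    injective gen /\
    forall (n : nat) (v : 'I_n -> G) (P : mpoly.mpoly n R),
      injective v -> P != 0 -> mpoly.mcoeff (@mpoly.mnm0 n) P = 0 ->
      let x := peval P (fun i => gen (v i)) in
      (exists a, exists t, I01 t /\ x a t <> 0) /\ S x.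

End Defs.

From HB Require Import structures.
From mathcomp Require Import all_boot all_order all_algebra.
From mathcomp Require Import all_classical all_reals all_analysis.
From mathcomp Require mpoly.
From mathcomp Require Import ring lra.
From mathcomp Require Import measurable_realfun.
Set Implicit Arguments. Unset Strict Implicit. Unset Printing Implicit Defensive.
Import Order.TTheory GRing.Theory Num.Theory.
Import numFieldNormedType.Exports.
Import Num.Def.
Local Open Scope classical_set_scope.
Local Open Scope ring_scope.

(* As kappa = cov(N), [0,1] has a null covering (N_a)_{a<kappa}; as kappa = add(N),
   the union of the N_b with b < a is contained in a null set M_a, and every t
   in [0,1] lies in M_a for all large a.  The generators are the kappa-sequences
   g_r = (1_{~M_a} * exp (t ^ -(1 + e^r)))_a.  For a nonzero polynomial P without
   constant term, P(g_r1, ..., g_rn) is, at every index a, the function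
   Q(t) = P(exp (t ^ -q_1), ..., exp (t ^ -q_n)) set to zero on M_a.  So it
   converges to 0 at every point of [0,1]; but it equals Q almost everywhere,
   and |Q(t)| >= t^-2 near 0 because the monomial with the largest double
   exponential dominates.  Hence it neither converges in measure nor is
   dominated by an integrable function. *)

Section Asymptotics.
Variable R : realType.

Lemma near_all_seq (T : Type) (F : set_system T) (X : eqType) (s : seq X)
    (P : X -> T -> Prop) : Filter F ->
  (forall x, x \in s -> \forall t \near F, P x t) ->
  \forall t \near F, forall x, x \in s -> P x t.
Proof.
move=> FF; elim: s => [|a s IHs] Ps; first exact: filterE.
have /(filterI (Ps a (mem_head _ _))) : \forall t \near F, forall x, x \in s -> P x t.
  by apply: IHs => x xs; apply: Ps; rewrite in_cons xs orbT.
by apply: filterS => t [Pa Ps'] x; rewrite in_cons => /orP[/eqP->//|]; exact: Ps'.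
Qed.

Lemma seq_argmax (X : eqType) (s : seq X) (f : X -> R) :
  s != [::] -> exists2 x, x \in s & forall y, y \in s -> f y <= f x.
Proof.
elim: s => [//|a s IHs] _; have [->|sN0] := eqVneq s [::].
  by exists a; [exact: mem_head | move=> y; rewrite inE => /eqP->].
have [x xs xmax] := IHs sN0; have [fax|fxa] := leP (f a) (f x).
  exists x; first by rewrite in_cons xs orbT.
  by move=> y; rewrite in_cons => /orP[/eqP->//|]; exact: xmax.
exists a; first exact: mem_head.
by move=> y; rewrite in_cons => /orP[/eqP->//|/xmax/le_trans]; apply; exact: ltW.
Qed.

Lemma seq_pos_lower_bound (X : eqType) (s : seq X) (f : X -> R) :
  (forall x, x \in s -> 0 < f x) -> exists2 c, 0 < c & forall x, x \in s -> c <= f x.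
Proof.
elim: s => [|a s IHs] fs_gt0; first by exists 1.
have [|c c_gt0 cs] := IHs; first by move=> x xs; apply: fs_gt0; rewrite in_cons xs orbT.
exists (minr c (f a)); first by rewrite lt_min c_gt0 fs_gt0 ?mem_head.
by move=> x; rewrite in_cons ge_min => /orP[/eqP->|/cs->//]; rewrite lexx orbT.
Qed.

Lemma expR_ge_id (u : R) : u <= expR u.
Proof. by have := expR_ge1Dx u; lra. Qed.

Lemma expR_gap_near_pinfty (a b c : R) : a < b ->
  \forall u \near +oo, c * expR (a * u) <= expR (b * u).
Proof.
move=> ab; have ba_gt0 : 0 < b - a by rewrite subr_gt0.
near=> u; have u_ge : maxr 0 (c / (b - a)) <= u.
  by near: u; apply: nbhs_pinfty_ge; exact: num_real.
move: u_ge; rewrite ge_max ler_pdivrMr // => /andP[u_ge0 cu].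
have -> : b * u = a * u + (b - a) * u by ring.
rewrite expRD mulrC ler_wpM2l ?expR_ge0 //.
by apply: le_trans (expR_ge_id _); rewrite mulrC.
Unshelve. all: by end_near.
Qed.

Lemma norm_sum_expR_near_pinfty n (p : 'I_n -> R) (d : 'I_n -> int) (L : R) :
  injective p -> (forall i, 1 <= p i) -> (exists i, d i != 0) ->
  \forall u \near +oo, L <= `|\sum_i (d i)%:~R * expR (p i * u)|.
Proof.
move=> p_inj p_ge1 [i0 di0].
have n_gt0 : 0 < n%:R :> R by rewrite ltr0n; case: (n) (i0) => [[]|].
have [j] : exists2 j, j \in [seq i <- enum 'I_n | d i != 0] &
    forall i, i \in [seq i <- enum 'I_n | d i != 0] -> p i <= p j.
  apply: seq_argmax; apply/eqP => /(f_equal (fun s => i0 \in s)).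
  by rewrite mem_filter di0 mem_enum.
rewrite mem_filter mem_enum andbT => dj0 jmax.
have small : \forall u \near +oo, forall i, i != j ->
    `|(d i)%:~R * expR (p i * u)| <= expR (p j * u) / (2 * n%:R).
  apply: filter_forall => i; have [->|ij] := eqVneq i j.
    by apply: nearW => u /eqP.
  have [->|di0'] := eqVneq (d i) 0.
    by apply: nearW => u _; rewrite mul0r normr0 divr_ge0 ?expR_ge0 ?mulr_ge0 ?ltW.
  have pij : p i < p j.
    rewrite lt_neqAle jmax ?andbT; last by rewrite mem_filter di0' mem_enum.
    by apply: contra ij => /eqP/p_inj->.
  near=> u => _; rewrite normrM (ger0_norm (expR_ge0 _)) ler_pdivlMr ?mulr_gt0 //.
  by rewrite mulrAC; near: u; exact: expR_gap_near_pinfty.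
near=> u.
have u_ge : maxr 0 (2 * L) <= u by near: u; apply: nbhs_pinfty_ge; exact: num_real.
move: u_ge; rewrite ge_max => /andP[u_ge0 u_geL].
have small_u : forall i, i != j ->
    `|(d i)%:~R * expR (p i * u)| <= expR (p j * u) / (2 * n%:R).
  by near: u; exact: small.
set e := expR (p j * u).
rewrite (bigD1 j) //=; set r := \sum_(i | i != j) _.
have r_le : `|r| <= e / 2.
  apply: le_trans (ler_norm_sum _ _ _) _.
  apply: le_trans (_ : \sum_(i | i != j) e / (2 * n%:R) <= _).
    by apply: ler_sum => i; exact: small_u.
  apply: le_trans (_ : \sum_(i < n) e / (2 * n%:R) <= _).
    by rewrite [leRHS](bigD1 j) //= lerDr divr_ge0 ?expR_ge0 ?mulr_ge0 ?ltW.
  rewrite sumr_const card_ord -[_ *+ n]mulr_natr.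
  by rewrite [leLHS](_ : _ = e / 2) //; field; rewrite gt_eqF.
have e_ge : u <= e.
  apply: le_trans (expR_ge_id u) _; rewrite ler_expR.
  by have := p_ge1 j; nra.
have dj_ge1 : 1 <= `|(d j)%:~R : R| by rewrite norm_intr_ge1 ?intr_int ?intr_eq0.
have := ler_normB ((d j)%:~R * e + r) r.
rewrite addrK normrM (gtr0_norm (expR_gt0 _)) => tri.
have e_gt0 : 0 < e := expR_gt0 _.
by rewrite -/e in tri *; nra.
Unshelve. all: by end_near.
Qed.

End Asymptotics.

Section ExpExpPolynomials.
Variable R : realType.

Lemma dominant_expR_term (X : eqType) (s : seq X) (c E : X -> R) (x0 : X) (L : R) :
  uniq s -> x0 \in s -> (forall x, x \in s -> x != x0 -> E x + L <= E x0) ->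
  (`|c x0| - (\sum_(x <- s) `|c x|) * expR (- L)) * expR (E x0)
    <= `|\sum_(x <- s) c x * expR (E x)|.
Proof.
move=> s_uniq x0s gap; rewrite [X in _ <= `|X|](bigD1_seq x0 x0s s_uniq) /=.
set r := \sum_(x <- s | x != x0) c x * expR (E x).
have r_le : `|r| <= (\sum_(x <- s) `|c x|) * expR (- L) * expR (E x0).
  apply: le_trans (ler_norm_sum _ _ _) _.
  rewrite -mulrA mulr_suml [leRHS](bigD1_seq x0 x0s s_uniq) /= -[leLHS]add0r.
  apply: lerD; first by rewrite mulr_ge0 ?mulr_ge0 ?expR_ge0.
  rewrite big_seq_cond [leRHS]big_seq_cond; apply: ler_sum => x /andP[xs xx0].
  rewrite normrM (ger0_norm (expR_ge0 _)) ler_wpM2l // -expRD ler_expR.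
  by have := gap x xs xx0; lra.
have := ler_normB (c x0 * expR (E x0) + r) r.
by rewrite addrK normrM (ger0_norm (expR_ge0 _)) mulrBl; lra.
Qed.

Lemma sqr_le_expR (k w : R) : 0 < k -> 0 <= w -> 6 / k <= w -> w ^+ 2 <= k * expR w.
Proof.
move=> k_gt0 w_ge0; rewrite ler_pdivrMr // => kw.
have := expR_ge1Dxn 2 w_ge0; rewrite !factS fact0 /= => cube.
apply: le_trans (_ : k * (w ^+ 3 / 6) <= _); last by rewrite ler_wpM2l ?ltW //; lra.
by rewrite -subr_ge0 [X in 0 <= X](_ : _ = w ^+ 2 * (k * w - 6) / 6);
  [rewrite divr_ge0 ?mulr_ge0 ?sqr_ge0 // subr_ge0 mulrC | field].
Qed.

Definition mnm_expsum n (p : 'I_n -> R) (m : mpoly.multinom n) (u : R) : R :=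
  \sum_i (mpoly.fun_of_multinom m i)%:R * expR (p i * u).

Lemma meval_expR_expR n (P : mpoly.mpoly n R) (p : 'I_n -> R) (u : R) :
  mpoly.meval (fun i => expR (expR (p i * u))) P =
  \sum_(m <- mpoly.msupp P) mpoly.mcoeff m P * expR (mnm_expsum p m u).
Proof.
rewrite mpoly.mevalE; apply: eq_bigr => m _; congr (_ * _).
by rewrite /mnm_expsum expR_sum; apply: eq_bigr => i _; rewrite expRM_natl.
Qed.

Lemma mnm_expsum_sep_near_pinfty n (p : 'I_n -> R) (m m' : mpoly.multinom n) (L : R) :
  injective p -> (forall i, 1 <= p i) -> m != m' ->
  \forall u \near +oo, L <= `|mnm_expsum p m u - mnm_expsum p m' u|.
Proof.
move=> p_inj p_ge1 mm'.
pose d i := (mpoly.fun_of_multinom m i)%:Z - (mpoly.fun_of_multinom m' i)%:Z.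
have d_neq0 : exists i, d i != 0.
  apply: contrapT => /forallNP d0; move/eqP: mm'; apply; apply/mpoly.mnmP => i.
  by apply/eqP; rewrite -eqz_nat -subr_eq0; apply/negPn/negP/d0.
apply: filterS (norm_sum_expR_near_pinfty L p_inj p_ge1 d_neq0) => u.
by rewrite /mnm_expsum -sumrB; under eq_bigr => i _ do rewrite rmorphB mulrBl.
Qed.

Lemma expR_le_mnm_expsum n (p : 'I_n -> R) (m : mpoly.multinom n) k (u : R) :
  (forall i, 1 <= p i) -> (mpoly.fun_of_multinom m k != 0)%N -> 0 <= u ->
  expR u <= mnm_expsum p m u.
Proof.
move=> p_ge1 mk u_ge0; rewrite /mnm_expsum (bigD1 k) //=.
apply: le_trans (_ : (mpoly.fun_of_multinom m k)%:R * expR (p k * u) <= _); last first.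
  by rewrite lerDl sumr_ge0 // => i _; rewrite mulr_ge0 ?ler0n ?expR_ge0.
have mk_ge1 : 1 <= (mpoly.fun_of_multinom m k)%:R :> R by rewrite ler1n lt0n.
have : expR u <= expR (p k * u) by rewrite ler_expR; have := p_ge1 k; nra.
by have := expR_ge0 u; nra.
Qed.

Lemma msupp_mnm_neq0 n (P : mpoly.mpoly n R) m :
  mpoly.mcoeff (@mpoly.mnm0 n) P = 0 -> m \in mpoly.msupp P ->
  exists k, (mpoly.fun_of_multinom m k != 0)%N.
Proof.
move=> P0 mP; apply: contrapT => /forallNP m0.
have : m = @mpoly.mnm0 n.
  by apply/mpoly.mnmP => i; rewrite mpoly.mnm0E; apply/eqP/negPn/negP/m0.
by move=> mE; move: mP; rewrite mE mpoly.mcoeff_msupp P0 eqxx.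
Qed.

Lemma norm_meval_expR_expR_ge n (P : mpoly.mpoly n R) (p : 'I_n -> R) (c L u : R) :
  (forall i, 1 <= p i) -> P != 0 -> mpoly.mcoeff (@mpoly.mnm0 n) P = 0 -> 0 <= c ->
  (forall m, m \in mpoly.msupp P -> c <= `|mpoly.mcoeff m P|) ->
  (\sum_(m <- mpoly.msupp P) `|mpoly.mcoeff m P|) * expR (- L) <= c / 2 ->
  (forall m, m \in mpoly.msupp P -> forall m', m' \in mpoly.msupp P -> m != m' ->
    L <= `|mnm_expsum p m u - mnm_expsum p m' u|) ->
  0 <= u ->
  c / 2 * expR (expR u) <= `|mpoly.meval (fun i => expR (expR (p i * u))) P|.
Proof.
move=> p_ge1 P_neq0 P0 c_ge0 c_le SL sep u_ge0.
have supp_neq0 : mpoly.msupp P != [::] by rewrite mpoly.msupp_eq0.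
have [ms msP ms_max] := seq_argmax (fun m => mnm_expsum p m u) supp_neq0.
have gap : forall m, m \in mpoly.msupp P -> m != ms ->
    mnm_expsum p m u + L <= mnm_expsum p ms u.
  move=> m mP mms; have := sep ms msP m mP; rewrite eq_sym mms => /(_ isT).
  by have := ms_max m mP; rewrite /= => ms_ge; rewrite ger0_norm ?subr_ge0 //; lra.
rewrite meval_expR_expR.
apply: le_trans _
  (dominant_expR_term (fun m => mpoly.mcoeff m P) (mpoly.msupp_uniq P) msP gap).
apply: le_trans (_ : c / 2 * expR (mnm_expsum p ms u) <= _); last first.
  by rewrite ler_wpM2r ?expR_ge0 //=; have := c_le ms msP; lra.
rewrite ler_wpM2l ?divr_ge0 // ler_expR.
have [m0 m0P] : exists m0, m0 \in mpoly.msupp P.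
  by case: (mpoly.msupp P) supp_neq0 => [//|m0 s _]; exists m0; exact: mem_head.
have [k m0k] := msupp_mnm_neq0 P0 m0P.
by apply: le_trans (expR_le_mnm_expsum p_ge1 m0k u_ge0) _; exact: ms_max.
Qed.

Lemma meval_expR_expR_near_pinfty n (P : mpoly.mpoly n R) (p : 'I_n -> R) :
  injective p -> (forall i, 1 <= p i) -> P != 0 ->
  mpoly.mcoeff (@mpoly.mnm0 n) P = 0 ->
  \forall u \near +oo, expR u ^+ 2 <= `|mpoly.meval (fun i => expR (expR (p i * u))) P|.
Proof.
move=> p_inj p_ge1 P_neq0 P0.
have [c c_gt0 c_le] : exists2 c, 0 < c &
    forall m, m \in mpoly.msupp P -> c <= `|mpoly.mcoeff m P|.
  by apply: seq_pos_lower_bound => m; rewrite mpoly.mcoeff_msupp normr_gt0.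
set S := \sum_(m <- mpoly.msupp P) `|mpoly.mcoeff m P|.
have S_ge0 : 0 <= S by rewrite sumr_ge0.
set L := 2 * S / c.
have SL : S * expR (- L) <= c / 2.
  rewrite expRN ler_pdivrMr ?expR_gt0 //.
  have eL : c / 2 * (1 + L) = c / 2 + S by rewrite /L; field; rewrite gt_eqF.
  have := expR_ge1Dx L; have : 0 <= c / 2 by rewrite divr_ge0 ?ltW.
  nra.
have sep : \forall u \near +oo, forall m, m \in mpoly.msupp P ->
    forall m', m' \in mpoly.msupp P -> m != m' ->
    L <= `|mnm_expsum p m u - mnm_expsum p m' u|.
  apply: near_all_seq => m _; apply: near_all_seq => m' _.
  have [<-|mm'] := eqVneq m m'; first by apply: nearW => u /eqP.
  by near=> u => _; near: u; exact: mnm_expsum_sep_near_pinfty.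
near=> u.
have u_ge : maxr 0 (6 / (c / 2)) <= u by near: u; apply: nbhs_pinfty_ge; exact: num_real.
move: u_ge; rewrite ge_max => /andP[u_ge0 u_big].
have sep_u : forall m, m \in mpoly.msupp P -> forall m', m' \in mpoly.msupp P ->
    m != m' -> L <= `|mnm_expsum p m u - mnm_expsum p m' u|.
  by near: u; exact: sep.
apply: le_trans _ (norm_meval_expR_expR_ge p_ge1 P_neq0 P0 (ltW c_gt0) c_le SL sep_u u_ge0).
by apply: sqr_le_expR; rewrite ?divr_gt0 ?expR_ge0 //; exact: le_trans (expR_ge_id u).
Unshelve. all: by end_near.
Qed.

End ExpExpPolynomials.

Section InversePowers.
Variable R : realType.

(* [expR_invpow q t = exp (t ^ -q)] for [t > 0]. *)
Definition expR_invpow (q t : R) : R := expR (expR (q * - ln t)).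

Definition poly_expR_invpow n (P : mpoly.mpoly n R) (q : 'I_n -> R) (t : R) : R :=
  mpoly.meval (fun i => expR_invpow (q i) t) P.

Lemma measurable_expR_invpow q : measurable_fun [set: R] (expR_invpow q).
Proof.
apply: measurableT_comp; first exact: measurable_expR.
apply: measurableT_comp; first exact: measurable_expR.
apply: measurableT_comp; first exact: mulrl_measurable.
apply: measurableT_comp; first exact: oppr_measurable.
exact: measurable_ln.
Qed.

Lemma measurable_poly_expR_invpow n (P : mpoly.mpoly n R) q :
  measurable_fun [set: R] (poly_expR_invpow P q).
Proof.
rewrite (_ : poly_expR_invpow P q = fun t => \sum_(m <- mpoly.msupp P)
    mpoly.mcoeff m P * \prod_i expR_invpow (q i) t ^+ mpoly.fun_of_multinom m i).
  apply: measurable_sum => m; apply: measurable_funM; first exact: measurable_cst.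
  by apply: measurable_prod => i _; apply: measurable_funX; exact: measurable_expR_invpow.
by apply/funext => t; rewrite /poly_expR_invpow mpoly.mevalE.
Qed.

Lemma expR_invpow_inj (t : R) : 0 < t < 1 -> injective (expR_invpow ^~ t).
Proof.
move=> /andP[t_gt0 t_lt1] q q' /expR_inj/expR_inj/mulIf; apply.
by rewrite oppr_eq0 ln_eq0 ?posrE // lt_eqF.
Qed.

Lemma poly_expR_invpow_blowup n (P : mpoly.mpoly n R) (q : 'I_n -> R) :
  injective q -> (forall i, 1 <= q i) -> P != 0 ->
  mpoly.mcoeff (@mpoly.mnm0 n) P = 0 ->
  exists2 d0, 0 < d0 & forall t, 0 < t -> t <= d0 -> t^-1 ^+ 2 <= `|poly_expR_invpow P q t|.
Proof.
move=> q_inj q_ge1 P_neq0 P0.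
have [U [_ U_large]] := meval_expR_expR_near_pinfty q_inj q_ge1 P_neq0 P0.
exists (expR (- (U + 1))); first exact: expR_gt0.
move=> t t_gt0 t_le; have tpos : t \in Num.pos by rewrite posrE.
have : U < - ln t.
  have : ln t <= - (U + 1) by rewrite -ler_expR lnK.
  lra.
by move/U_large; rewrite expRN lnK.
Qed.

End InversePowers.

Section ZeroOn.
Variable R : realType.
Local Notation mu := (@lebesgue_measure R).
Local Notation I01 := (`[(0:R), 1]%classic : set R).

Definition zero_on (M : set R) (f : R -> R) (t : R) : R := \1_(~` M) t * f t.

Lemma zero_on_out (M : set R) f t : ~ M t -> zero_on M f t = f t.
Proof. by move=> Mt; rewrite /zero_on indicE mem_set // mul1r. Qed.

Lemma zero_on_in (M : set R) f t : M t -> zero_on M f t = 0.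
Proof. by move=> Mt; rewrite /zero_on indicE memNset ?mul0r. Qed.

Lemma measurable_zero_on (M : set R) f D : measurable M ->
  measurable_fun [set: R] f -> measurable_fun D (zero_on M f).
Proof.
move=> mM mf; apply: (measurable_funS (E := [set: R])) => //.
by apply: measurable_funM => //; apply: measurable_indic; exact: measurableC.
Qed.

Lemma meval_zero_on n (P : mpoly.mpoly n R) (M : set R) (f : 'I_n -> R -> R) t :
  mpoly.mcoeff (@mpoly.mnm0 n) P = 0 ->
  mpoly.meval (fun i => zero_on M (f i) t) P = zero_on M (fun s => mpoly.meval (f^~ s) P) t.
Proof.
move=> P0; have [Mt|Mt] := pselect (M t); last first.
  by rewrite zero_on_out //; apply: mpoly.meval_eq => i; exact: zero_on_out.
rewrite zero_on_in // mpoly.mevalE big1_seq // => m /andP[_ mP].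
have [k mk] := msupp_mnm_neq0 P0 mP.
by rewrite (bigD1 k) //= zero_on_in // expr0n (negbTE mk) mul0r mulr0.
Qed.

Lemma lebesgue_measure_itv_setD_null (M : set R) (e : R) :
  measurable M -> mu M = 0%E -> 0 < e -> mu (`]0, e[ `\` M) = e%:E.
Proof.
move=> mM M0 e_gt0.
have itvE : mu `]0, e[ = e%:E by rewrite lebesgue_measure_itv /= lte_fin e_gt0 sube0.
rewrite measureD //; last by rewrite [X in (X < _)%E](_ : _ = e%:E) ?ltry.
rewrite [X in (_ - X)%E](_ : _ = 0%E) ?sube0 //.
apply/eqP; rewrite eq_le measure_ge0 andbT -M0.
by apply: le_measure; rewrite ?inE //; exact: measurableI.
Qed.

Lemma exists_itv_notin_null (M : set R) : measurable M -> mu M = 0%E ->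
  exists t, 0 < t < 1 /\ ~ M t.
Proof.
move=> mM M0; apply: contrapT => /forallNP noM.
have := lebesgue_measure_itv_setD_null mM M0 ltr01.
rewrite (_ : _ `\` _ = set0) ?measure0 => [/eqP|]; first by rewrite eq_sym onee_eq0.
by apply/seteqP; split => // t [t01 Mt]; apply: (noM t); split.
Qed.

Section BlowUp.
Variables (Q : R -> R) (d0 : R) (M : set R).
Hypotheses (mQ : measurable_fun [set: R] Q) (d0_gt0 : 0 < d0)
  (Q_blowup : forall t, 0 < t -> t <= d0 -> t^-1 ^+ 2 <= `|Q t|)
  (mM : measurable M) (M0 : mu M = 0%E).

Lemma zero_on_blowup e t : e <= d0 -> (`]0, e[ `\` M) t -> e^-1 ^+ 2 <= `|zero_on M Q t|.
Proof.
move=> e_le [/= + Mt]; rewrite zero_on_out // in_itv /= => /andP[t_gt0 t_lt].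
apply: le_trans (Q_blowup t_gt0 (le_trans (ltW t_lt) e_le)).
have e_gt0 : 0 < e := lt_trans t_gt0 t_lt.
by rewrite lerXn2r ?nnegrE ?invr_ge0 ?ltW // ltf_pV2 ?posrE.
Qed.

Lemma measurable_norm_zero_on : measurable_fun I01 (fun t => (`|zero_on M Q t|)%:E).
Proof.
apply/measurable_EFinP; apply: measurableT_comp; first exact: normr_measurable.
exact: measurable_zero_on.
Qed.

Lemma zero_on_integral_unbounded (F : R) :
  ~ (\int[mu]_(t in I01) (`|zero_on M Q t|)%:E <= F%:E)%E.
Proof.
set e := minr (minr d0 1) ((`|F| + 1)^-1).
have F1_gt0 : 0 < `|F| + 1 by rewrite ltr_wpDl.
have e_gt0 : 0 < e by rewrite !lt_min d0_gt0 ltr01 invr_gt0 F1_gt0.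
have e_le_d0 : e <= d0 by rewrite !ge_min lexx.
have e_le1 : e <= 1 by rewrite !ge_min lexx orbT.
have e_leF : e <= (`|F| + 1)^-1 by rewrite ge_min lexx orbT.
move=> int_le.
have mG : measurable (`]0, e[ `\` M) by apply: measurableD => //; exact: measurable_itv.
have GI : `]0, e[ `\` M `<=` I01.
  move=> t [/= + _]; rewrite !in_itv /= => /andP[t_gt0 t_lt].
  by rewrite (ltW t_gt0) (le_trans (ltW t_lt) e_le1).
have restrict_le := ge0_subset_integral mu mG (measurable_itv `[0, 1])
  measurable_norm_zero_on (fun t _ => ltac:(by rewrite lee_fin)) GI.
have cst_le : (\int[mu]_(t in `]0%R, e[ `\` M) (e^-1 ^+ 2)%:E <=
    \int[mu]_(t in `]0%R, e[ `\` M) (`|zero_on M Q t|)%:E)%E.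
  apply: ge0_le_integral => //.
  - by move=> t _; rewrite lee_fin exprn_ge0 // invr_ge0 ltW.
  - by apply: measurable_funS measurable_norm_zero_on => //; exact: measurable_itv.
  - by move=> t Gt; rewrite lee_fin; exact: zero_on_blowup.
rewrite integral_cst // [X in (_ * X)%E](_ : _ = e%:E) in cst_le; last first.
  exact: lebesgue_measure_itv_setD_null.
have := le_trans cst_le (le_trans restrict_le int_le).
rewrite -EFinM lee_fin expr2 -mulrA mulVf ?gt_eqF // mulr1.
have : `|F| + 1 <= e^-1 by rewrite -[X in X <= _]invrK lef_pV2 ?posrE ?invr_gt0.
by have := ler_norm F; lra.
Qed.

Lemma zero_on_measure_ge :
  ((minr d0 2^-1)%:E <= mu [set t | I01 t /\ (1 <= `|zero_on M Q t|)%R])%E.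
Proof.
set e := minr d0 2^-1.
have e_gt0 : 0 < e by rewrite lt_min d0_gt0 invr_gt0 ltr0n.
have e_le2 : e <= 2^-1 by rewrite ge_min lexx orbT.
have mS : measurable [set t | I01 t /\ 1 <= `|zero_on M Q t|].
  have mf : measurable_fun I01 (fun t => `|zero_on M Q t|).
    by apply: measurableT_comp; [exact: normr_measurable | exact: measurable_zero_on].
  have := mf (measurable_itv `[0, 1]) _ (measurable_itv `[1, +oo[).
  congr measurable; apply/seteqP.
  by split => t /= [It h]; split => //; move: h; rewrite in_itv /= ?andbT.
rewrite -(lebesgue_measure_itv_setD_null mM M0 e_gt0).
apply: le_measure; rewrite ?inE //; first by apply: measurableD => //; exact: measurable_itv.
move=> t Gt; split.
  move: Gt => [/= + _]; rewrite !in_itv /= => /andP[t_gt0 t_lt].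
  by rewrite (ltW t_gt0) (le_trans (ltW t_lt)) // (le_trans e_le2) // invf_le1 ?ler1n.
have e_le_d0 : e <= d0 by rewrite ge_min lexx.
apply: le_trans (zero_on_blowup e_le_d0 Gt).
have : 2 <= e^-1 by rewrite -[X in X <= _]invrK lef_pV2 ?posrE ?invr_gt0.
have : 0 <= e^-1 by rewrite invr_ge0 ltW.
nra.
Qed.

End BlowUp.
End ZeroOn.

Section NullSets.
Variable R : realType.
Local Notation mu := (@lebesgue_measure R).
Local Notation I01 := (`[(0:R), 1]%classic : set R).

Lemma null01U (A B : set R) : null01 A -> null01 B -> null01 (A `|` B).
Proof.
move=> [AI An] [BI Bn]; split; last exact: negligibleU.
by move=> t [/AI|/BI].
Qed.

Lemma null01S (A B : set R) : null01 B -> A `<=` B -> null01 A.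
Proof. by move=> [BI Bn] AB; split; [exact: subset_trans BI | exact: negligibleS Bn]. Qed.

Variables (d : Order.disp_t) (K : orderType d).
Hypotheses (K_init : initial_ordinal K) (K_addN : card_is_addN R K).

Lemma null01_bigcup_lt (N : K -> set R) : (forall a, null01 (N a)) ->
  forall a, null01 (\bigcup_(b in [set b : K | (b < a)%O]) N b).
Proof.
move=> N_null a; have [seg_le seg_nge] := K_init.2 a.
have seg_lt : card_lt [set b : K | (b < a)%O] K.
  by split; [rewrite (card_le_eql (card_setT _)) | rewrite (card_le_eqr (card_setT _))].
rewrite bigcup_set_type.
exact: K_addN.2 _ (fun b => N (val b)) seg_lt (fun b => N_null _).
Qed.

Lemma addN_inhabited : inhabited K.
Proof.
have [N [_ N_nonnull]] := K_addN.1; apply: contrapT => K_empty.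
apply: N_nonnull; apply: (@null01S _ set0); first by split => //; exact: negligible_set0.
by move=> t [a _ _]; apply: K_empty.
Qed.

Lemma initial_ordinal_nomax (a : K) : exists b, (a < b)%O.
Proof.
apply: contrapT => /forallNP a_max; have [N [N_null N_nonnull]] := K_addN.1.
apply: N_nonnull; apply: (@null01S _
    ((\bigcup_(b in [set b : K | (b < a)%O]) N b) `|` N a)).
  by apply: null01U => //; exact: null01_bigcup_lt.
move=> t [b _ Nbt]; have [ba|ab|ba] := ltgtP b a.
- by left; exists b.
- by case: (a_max b).
- by right; rewrite -ba.
Qed.

Hypothesis K_covN : card_is_covN R K.

Lemma null_cover_eventually : exists M : K -> set R,
  (forall a, measurable (M a) /\ mu (M a) = 0%E) /\
  (forall t, I01 t -> exists b, forall a, (b < a)%O -> M a t).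
Proof.
have [N [N_null N_cover]] := K_covN.1.
have [M M_spec] := choice (fun a => (null01_bigcup_lt N_null a).2).
exists M; split; first by move=> a; have [] := M_spec a.
move=> t /N_cover [b _ Nbt]; exists b => a ba.
by have [_ _] := M_spec a; apply; exists b.
Qed.

End NullSets.

Section NullFamilies.
Variable R : realType.
Local Notation mu := (@lebesgue_measure R).
Local Notation I01 := (`[(0:R), 1]%classic : set R).
Variables (d : Order.disp_t) (K : orderType d) (M : K -> set R) (Q : R -> R) (d0 : R).
Hypotheses (M_null : forall a, measurable (M a) /\ mu (M a) = 0%E)
  (M_ev : forall t, I01 t -> exists b, forall a, (b < a)%O -> M a t)
  (K_nomax : forall a : K, exists b, (a < b)%O)
  (mQ : measurable_fun [set: R] Q) (d0_gt0 : 0 < d0)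
  (Q_blowup : forall t, 0 < t -> t <= d0 -> t^-1 ^+ 2 <= `|Q t|).

Let e_gt0 : 0 < minr d0 2^-1.
Proof. by rewrite lt_min d0_gt0 invr_gt0 ltr0n. Qed.

Lemma zero_on_family_neq0 a : exists t, I01 t /\ zero_on (M a) Q t <> 0.
Proof.
apply: contrapT => /forallNP zero_on0; have [mM M0] := M_null a.
have := zero_on_measure_ge mQ d0_gt0 Q_blowup mM M0.
rewrite (_ : [set t | _] = set0) ?measure0 ?lee_fin ?leNgt ?e_gt0 //.
apply/seteqP; split => // t [It m1]; apply: (zero_on0 t); split => // m0.
by move: m1; rewrite m0 normr0 ler10.
Qed.

Lemma zero_on_family_kconv_ae0 : kconv_ae (fun a => zero_on (M a) Q) (fun=> 0).
Proof.
apply: aeW => t It U U0; have [b Mb] := M_ev It.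
by exists b => a ba; rewrite (zero_on_in _ (Mb a ba)); exact: nbhs_singleton.
Qed.

Lemma zero_on_family_not_kconv_measure0 :
  ~ kconv_measure (fun a => zero_on (M a) Q) (fun=> 0).
Proof.
move=> conv.
have [a1 a1_conv] := conv 1 ltr01 _ (nbhs_open_ereal_lt (f := fun=> minr d0 2^-1) e_gt0).
have [a a1a] := K_nomax a1; have [mM M0] := M_null a.
have lt_e : (mu [set t | I01 t /\ (1 <= `|zero_on (M a) Q t|)%R] < (minr d0 2^-1)%:E)%E.
  move: (a1_conv a a1a) => /=.
  rewrite (_ : [set t | _] = [set t | I01 t /\ (1 <= `|zero_on (M a) Q t|)%R]) //.
  by apply/seteqP; split => t /=; rewrite subr0.
by have := le_lt_trans (zero_on_measure_ge mQ d0_gt0 Q_blowup mM M0) lt_e; rewrite ltxx.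
Qed.

Lemma ANM_zero_on_family : ANM (fun a => zero_on (M a) Q).
Proof.
split=> [a|]; first exact: measurable_zero_on (M_null a).1 mQ.
exists (fun=> 0); split; first exact: measurable_cst.
by split; [exact: zero_on_family_kconv_ae0 | exact: zero_on_family_not_kconv_measure0].
Qed.

Lemma zero_on_family_not_ND (a0 : K) : ~ ND (fun a => zero_on (M a) Q).
Proof.
move=> [_ [[g [g_int g_dom]] _]]; have [mg g_fin] := integrableP _ _ _ g_int.
have [mM M0] := M_null a0.
apply: (zero_on_integral_unbounded mQ d0_gt0 Q_blowup mM M0
  (F := fine (\int[mu]_(t in I01) `|(EFin \o g) t|)%E)).
rewrite fineK; last by rewrite ge0_fin_numE // integral_ge0.
apply: ae_ge0_le_integral => //.
- exact: measurable_norm_zero_on.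
- by apply: measurableT_comp mg; exact: abse_measurable.
- have mu_ae_filter := ae_filter_ringOfSetsType mu.
  move: (g_dom a0); apply: filterS => t g_le It.
  apply: le_trans (_ : (`|g t|)%:E <= _)%E; last by rewrite -abse_EFin.
  by rewrite lee_fin; apply: le_trans (g_le It) (ler_norm _).
Qed.

End NullFamilies.

Section Generators.
Variable R : realType.
Variables (d : Order.disp_t) (K : orderType d) (M : K -> set R).

(* The exponents [1 + exp r] are pairwise distinct and at least 1. *)
Definition zero_on_gen (r : R) (a : K) : R -> R := zero_on (M a) (expR_invpow (1 + expR r)).

Lemma zero_on_gen_inj (a : K) :
  measurable (M a) -> lebesgue_measure (M a) = 0%E -> injective zero_on_gen.
Proof.
move=> mM M0; have [t [t01 Mt]] := exists_itv_notin_null mM M0.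
have gen_t s : zero_on_gen s a t = expR_invpow (1 + expR s) t by exact: zero_on_out.
move=> r r' rr'; apply/expR_inj/(addrI 1)/(expR_invpow_inj t01).
by rewrite -[LHS]gen_t -[RHS]gen_t rr'.
Qed.

Lemma peval_zero_on_gen n (P : mpoly.mpoly n R) (v : 'I_n -> R) :
  mpoly.mcoeff (@mpoly.mnm0 n) P = 0 ->
  peval P (fun i => zero_on_gen (v i)) =
  fun a => zero_on (M a) (poly_expR_invpow P (fun i => 1 + expR (v i))).
Proof. by move=> P0; apply/funext => a; apply/funext => t; exact: meval_zero_on. Qed.

End Generators.

Theorem mainTheorem12 (R : realType) (d : Order.disp_t) (K : orderType d) :
  initial_ordinal K ->
  card_is_addN R K -> card_is_covN R K ->
  @strongly_algebrable R K R
    (fun fs => ANM fs /\ ~ ND fs).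
Proof.
move=> K_init K_addN K_covN.
have [a0] := addN_inhabited K_addN.
have [M [M_null M_ev]] := null_cover_eventually K_init K_addN K_covN.
have K_nomax := initial_ordinal_nomax K_init K_addN.
exists (zero_on_gen M); split; first exact: zero_on_gen_inj (M_null a0).1 (M_null a0).2.
move=> n v P v_inj P_neq0 P0 x; rewrite {}/x peval_zero_on_gen //.
set q := fun i => 1 + expR (v i).
have q_inj : injective q by move=> i j /addrI/expR_inj/v_inj.
have q_ge1 i : 1 <= q i by rewrite lerDl expR_ge0.
have [d0 d0_gt0 Q_blowup] := poly_expR_invpow_blowup q_inj q_ge1 P_neq0 P0.
have mQ := measurable_poly_expR_invpow P q.
split; first by exists a0; exact: zero_on_family_neq0 M_null mQ d0_gt0 Q_blowup a0.
split; first exact: ANM_zero_on_family M_null M_ev K_nomax mQ d0_gt0 Q_blowup.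
exact: zero_on_family_not_ND M_null mQ d0_gt0 Q_blowup a0.
Qed.
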